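(* Let $w = e^{i\varphi}$ with $0 < \varphi < \pi$, and put $\sqrt{w} = e^{i\varphi/2}$. Let $n$ and $r$ be positive integers and \[ R_{n,r}(x) = \frac{\Gamma(r+1+1/n)}{r!\,\Gamma(1/n)} \int_{1}^{x} (1-t)^{r}(t-x)^{r} t^{-(r+1-1/n)}\, dt, \] where the integration path is the straight line from $1$ to $x$. Then \[ \left|R_{n,r}(w)\right| \leq \frac{\Gamma(r+1+1/n)}{r!\,\Gamma(1/n)}\, \varphi\, \left|1-\sqrt{w}\right|^{2r}. \]
   Context: The power $t^{-(r+1-1/n)}$ is taken with the principal branch. *)

From Stdlib Require Import Reals.
From Stdlib Require Import Factorial.
From Coquelicot Require Import Coquelicot.
Open Scope R_scope.

Definition Gamma (s : R) : R :=
  RInt_gen (fun t => Rpower t (s - 1) * exp (- t)) (at_right 0) (Rbar_locally p_infty).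

Definition Carg (z : C) : R :=
  if Rle_dec 0 (Im z) then acos (Re z / Cmod z) else - acos (Re z / Cmod z).

Definition Clog (z : C) : C := (ln (Cmod z), Carg z).

Definition Cexp (z : C) : C := (exp (Re z) * cos (Im z), exp (Re z) * sin (Im z)).

Definition Cpow_princ (z a : C) : C := Cexp (Cmult a (Clog z)).

Definition CRInt (f : R -> C) (a b : R) : C :=
  (RInt (fun s => Re (f s)) a b, RInt (fun s => Im (f s)) a b).

Definition seg_int (f : C -> C) (z0 z1 : C) : C :=
  CRInt (fun s => Cmult (f (Cplus z0 (Cmult (RtoC s) (Cminus z1 z0)))) (Cminus z1 z0)) 0 1.

Definition cst_nr (n r : nat) : R :=
  Gamma (INR r + 1 + / INR n) / (INR (Factorial.fact r) * Gamma (/ INR n)).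

Definition R_nr (n r : nat) (x : C) : C :=
  Cmult (RtoC (cst_nr n r))
    (seg_int (fun t => Cmult (Cmult (pow_n (Cminus (RtoC 1) t) r) (pow_n (Cminus t x) r))
                             (Cpow_princ t (RtoC (- (INR r + 1 - / INR n)))))
             (RtoC 1) x).

(** The integrand [(1-t)^r (t-w)^r t^(-(r+1-1/n))] is a polynomial times a principal
    power of [t], so it has a primitive on the plane slit along the closed negative real
    axis.  Hence its integral along the segment from [1] to [w] equals its integral
    along the unit-circle arc [t = e^(i s)], [0 <= s <= phi].  On that arc the power
    has modulus [1], and
    [|1 - t| |t - w| = 4 sin (s/2) sin ((phi-s)/2) <= 4 sin (phi/4)^2 = |1 - sqrt w|^2],
    so the arc integral has modulus at most [phi |1 - sqrt w|^(2r)]. *)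

From Stdlib Require Import Reals Lra Factorial Classical.
From Coquelicot Require Import Coquelicot.
Open Scope R_scope.

Lemma is_derive_eq (f : R -> R) x l l' : is_derive f x l -> l = l' -> is_derive f x l'.
Proof. now intros H <-. Qed.

Lemma is_derive_Rplus (f g : R -> R) x df dg :
  is_derive f x df -> is_derive g x dg -> is_derive (fun t => f t + g t) x (df + dg).
Proof. intros Hf Hg. exact (is_derive_plus f g x df dg Hf Hg). Qed.

Lemma is_derive_Rmult (f g : R -> R) x df dg :
  is_derive f x df -> is_derive g x dg ->
  is_derive (fun t => f t * g t) x (df * g x + f x * dg).
Proof. intros Hf Hg. apply (is_derive_mult f g); auto. intros; apply Rmult_comm. Qed.

Lemma is_derive_Rcomp (f g : R -> R) x df dg :
  is_derive f (g x) df -> is_derive g x dg -> is_derive (fun t => f (g t)) x (dg * df).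
Proof. intros Hf Hg. exact (is_derive_comp f g x df dg Hf Hg). Qed.

Definition is_Cderive (g : R -> C) (x : R) (d : C) : Prop :=
  is_derive (fun s => Re (g s)) x (Re d) /\ is_derive (fun s => Im (g s)) x (Im d).

Definition ex_Cderive (g : R -> C) (x : R) : Prop := exists d, is_Cderive g x d.

Lemma is_Cderive_eq g x d d' : is_Cderive g x d -> d = d' -> is_Cderive g x d'.
Proof. now intros H <-. Qed.

Lemma is_Cderive_const (c : C) x : is_Cderive (fun _ => c) x 0.
Proof. split; exact (is_derive_const _ _). Qed.

Lemma is_Cderive_RtoC x : is_Cderive RtoC x 1.
Proof. split; [exact (is_derive_id _) | exact (is_derive_const _ _)]. Qed.

Lemma is_Cderive_plus f g x a b : is_Cderive f x a -> is_Cderive g x b ->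
  is_Cderive (fun t => f t + g t)%C x (a + b).
Proof.
  intros [H1 H2] [H3 H4]; split;
    [exact (is_derive_plus _ _ _ _ _ H1 H3) | exact (is_derive_plus _ _ _ _ _ H2 H4)].
Qed.

Lemma is_Cderive_minus f g x a b : is_Cderive f x a -> is_Cderive g x b ->
  is_Cderive (fun t => f t - g t)%C x (a - b).
Proof.
  intros [H1 H2] [H3 H4]; split;
    [exact (is_derive_minus _ _ _ _ _ H1 H3) | exact (is_derive_minus _ _ _ _ _ H2 H4)].
Qed.

Lemma is_Cderive_mult f g x a b : is_Cderive f x a -> is_Cderive g x b ->
  is_Cderive (fun t => f t * g t)%C x (a * g x + f x * b).
Proof.
  intros [H1 H2] [H3 H4]; split; simpl.
  - eapply is_derive_eq.
    + exact (is_derive_minus _ _ _ _ _ (is_derive_Rmult _ _ _ _ _ H1 H3)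
                                       (is_derive_Rmult _ _ _ _ _ H2 H4)).
    + unfold minus, plus, opp, Re, Im; simpl; ring.
  - eapply is_derive_eq.
    + exact (is_derive_plus _ _ _ _ _ (is_derive_Rmult _ _ _ _ _ H1 H4)
                                      (is_derive_Rmult _ _ _ _ _ H2 H3)).
    + unfold minus, plus, opp, Re, Im; simpl; ring.
Qed.

Lemma is_Cderive_Cexp u x d : is_Cderive u x d ->
  is_Cderive (fun t => Cexp (u t)) x (Cexp (u x) * d).
Proof.
  intros [H1 H2]; unfold Cexp; split; simpl.
  - eapply is_derive_eq.
    + apply is_derive_Rmult; apply is_derive_Rcomp;
        eauto using is_derive_exp, is_derive_cos.
    + unfold minus, plus, opp, Re, Im; simpl; ring.
  - eapply is_derive_eq.
    + apply is_derive_Rmult; apply is_derive_Rcomp;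
        eauto using is_derive_exp, is_derive_sin.
    + unfold minus, plus, opp, Re, Im; simpl; ring.
Qed.

Lemma is_Cderive_unit_circle t : is_Cderive (fun s => (cos s, sin s)) t (- sin t, cos t).
Proof. split; [exact (is_derive_cos t) | exact (is_derive_sin t)]. Qed.

Lemma ex_Cderive_mult f g x : ex_Cderive f x -> ex_Cderive g x ->
  ex_Cderive (fun t => f t * g t)%C x.
Proof. intros [a Ha] [b Hb]. eexists. exact (is_Cderive_mult _ _ _ _ _ Ha Hb). Qed.

Lemma ex_Cderive_pow_n f x k : ex_Cderive f x -> ex_Cderive (fun t => pow_n (f t) k) x.
Proof.
  intros Hf. induction k as [|k IH].
  - exists 0%C. exact (is_Cderive_const 1 x).
  - change (ex_Cderive (fun t => f t * pow_n (f t) k)%C x). now apply ex_Cderive_mult.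
Qed.

(** * The principal logarithm and powers on the slit plane *)

(** [z] lies off the closed negative real axis. *)
Definition slit (z : C) : Prop := 0 < Cmod z + Re z.

Lemma Cmod_sqr (z : C) : Cmod z * Cmod z = Re z * Re z + Im z * Im z.
Proof. unfold Cmod. rewrite sqrt_sqrt; [unfold Re, Im; simpl; ring | nra]. Qed.

Lemma slit_Cmod_pos z : slit z -> 0 < Cmod z.
Proof.
  unfold slit; intros H. pose proof (re_le_Cmod z); pose proof (Rle_abs (Re z)). lra.
Qed.

Lemma slit_neq_0 z : slit z -> z <> 0%C.
Proof. intros H E. pose proof (slit_Cmod_pos z H) as P. rewrite E, Cmod_0 in P. lra. Qed.

Lemma slit_of_Re_pos_or_Im_pos z : 0 < Re z \/ 0 < Im z -> slit z.
Proof.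
  intros H. unfold slit. pose proof (Cmod_ge_0 z). pose proof (Cmod_sqr z). nra.
Qed.

Lemma cos_atan_sqr q : cos (atan q) * cos (atan q) = / (1 + q²).
Proof.
  assert (P : 0 < 1 + q²) by (pose proof (Rle_0_sqr q); lra).
  rewrite cos_atan. unfold Rdiv. rewrite !Rmult_1_l, <- Rinv_mult, sqrt_sqrt; lra.
Qed.

Lemma cos_2atan q : cos (2 * atan q) = (1 - q²) / (1 + q²).
Proof.
  assert (P : 0 < 1 + q²) by (pose proof (Rle_0_sqr q); lra).
  rewrite cos_2a_cos, Rmult_assoc, cos_atan_sqr. field. lra.
Qed.

Lemma sin_2atan q : sin (2 * atan q) = 2 * q / (1 + q²).
Proof.
  assert (P : 0 < 1 + q²) by (pose proof (Rle_0_sqr q); lra).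
  rewrite sin_2a, sin_atan, cos_atan.
  replace (2 * (q / sqrt (1 + q²)) * (1 / sqrt (1 + q²)))
    with (2 * q * (1 / sqrt (1 + q²) * (1 / sqrt (1 + q²))))
    by (field; apply Rgt_not_eq, sqrt_lt_R0; lra).
  rewrite <- cos_atan, cos_atan_sqr. field. lra.
Qed.

Lemma atan_ge_0 q : 0 <= q -> 0 <= atan q.
Proof.
  intros [Hq | <-].
  - left. rewrite <- atan_0. now apply atan_increasing.
  - rewrite atan_0. lra.
Qed.

Lemma atan_lt_0 q : q < 0 -> atan q < 0.
Proof. intros Hq. rewrite <- atan_0. now apply atan_increasing. Qed.

(** Half-angle formula [tan (Arg z / 2) = Im z / (|z| + Re z)]: unlike [Carg], it is
    smooth on the whole slit plane. *)
Definition half_arg (z : C) : R := atan (Im z / (Cmod z + Re z)).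

Lemma one_plus_tan_half_arg_sqr z : slit z ->
  1 + (Im z / (Cmod z + Re z))² = 2 * Cmod z / (Cmod z + Re z).
Proof.
  intros Hs. pose proof (Cmod_sqr z). unfold slit, Rsqr in *.
  field_simplify_eq; [nra | lra].
Qed.

Lemma cos_sin_2half_arg z : slit z ->
  cos (2 * half_arg z) = Re z / Cmod z /\ sin (2 * half_arg z) = Im z / Cmod z.
Proof.
  intros Hs. pose proof (slit_Cmod_pos z Hs) as Hm. pose proof (Cmod_sqr z) as Hmm.
  unfold half_arg. rewrite cos_2atan, sin_2atan, one_plus_tan_half_arg_sqr by exact Hs.
  unfold slit in Hs. unfold Rsqr.
  split; field_simplify_eq; try nra; repeat split; lra.
Qed.

Lemma Carg_slit z : slit z -> Carg z = 2 * half_arg z.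
Proof.
  intros Hs. pose proof (slit_Cmod_pos z Hs) as Hm. pose proof PI_RGT_0.
  destruct (cos_sin_2half_arg z Hs) as [Ec _].
  unfold slit in Hs. unfold Carg. rewrite <- Ec.
  pose proof (atan_bound (Im z / (Cmod z + Re z))) as B. unfold half_arg in *.
  destruct (Rle_dec 0 (Im z)) as [Hy | Hy].
  - assert (0 <= atan (Im z / (Cmod z + Re z))).
    { apply atan_ge_0, Rdiv_le_0_compat; lra. }
    apply acos_cos. lra.
  - assert (atan (Im z / (Cmod z + Re z)) < 0).
    { apply atan_lt_0. apply Rmult_lt_reg_r with (Cmod z + Re z); [lra |].
      field_simplify; lra. }
    rewrite <- cos_neg, acos_cos by lra. ring.
Qed.

Lemma Cexp_Clog z : slit z -> Cexp (Clog z) = z.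
Proof.
  intros Hs. pose proof (slit_Cmod_pos z Hs).
  destruct (cos_sin_2half_arg z Hs) as [Ec Es].
  unfold Cexp, Clog, Re, Im in *; simpl in *.
  rewrite exp_ln, Carg_slit, Ec, Es by auto.
  destruct z as [x y]; simpl. f_equal; field; lra.
Qed.

Lemma locally_pos (h : R -> R) x : continuous h x -> 0 < h x -> locally x (fun t => 0 < h t).
Proof. intros Hc Hp. apply Hc, (open_gt 0), Hp. Qed.

Lemma is_derive_Cmod g x d : is_Cderive g x d -> 0 < Cmod (g x) ->
  is_derive (fun t => Cmod (g t)) x ((Re (g x) * Re d + Im (g x) * Im d) / Cmod (g x)).
Proof.
  intros [H1 H2] Hm. pose proof (Cmod_sqr (g x)) as Hmm. unfold Cmod in *.
  eapply is_derive_eq.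
  - apply is_derive_sqrt; [apply is_derive_Rplus; apply is_derive_pow; eassumption |].
    apply sqrt_lt_0_alt. now rewrite sqrt_0.
  - unfold Re, Im in *; simpl in *. field. lra.
Qed.

Lemma is_Cderive_Clog g x d : is_Cderive g x d -> slit (g x) ->
  is_Cderive (fun t => Clog (g t)) x (d / g x).
Proof.
  intros Hd Hs. pose proof (slit_Cmod_pos _ Hs) as Hm. pose proof (Cmod_sqr (g x)) as Hmm.
  pose proof (one_plus_tan_half_arg_sqr _ Hs) as Hsec.
  pose proof (is_derive_Cmod g x d Hd Hm) as HM. destruct Hd as [H1 H2].
  pose proof (is_derive_Rplus _ _ _ _ _ HM H1) as Hden.
  assert (Hslit : locally x (fun t => slit (g t))).
  { apply locally_pos; [| exact Hs].
    apply (ex_derive_continuous (K := R_AbsRing) (V := R_NormedModule)). eexists; eauto. }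
  unfold slit in Hs.
  split.
  - eapply is_derive_eq.
    + exact (is_derive_Rcomp ln (fun t => Cmod (g t)) x _ _ (is_derive_ln _ Hm) HM).
    + destruct (g x) as [X Y], d as [a b]. unfold Cdiv, Cinv, Cmult, Re, Im in *; simpl in *.
      set (M := Cmod (X, Y)) in *.
      replace (X * (X * 1) + Y * (Y * 1)) with (M * M) by lra. field. lra.
  - apply is_derive_ext_loc with (f := fun t => 2 * half_arg (g t)).
    { apply (filter_imp (fun t => slit (g t))); [| exact Hslit].
      intros t Ht. symmetry. apply Carg_slit, Ht. }
    eapply is_derive_eq.
    + apply is_derive_scal, (is_derive_Rcomp atan), is_derive_div;
        [apply is_derive_atan | exact H2 | exact Hden | lra].
    + cbv beta. destruct (g x) as [X Y], d as [a b].
      unfold Cdiv, Cinv, Cmult, Re, Im in *; simpl in *.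
      set (M := Cmod (X, Y)) in *.
      replace (X * (X * 1) + Y * (Y * 1)) with (M * M) by lra.
      rewrite Hsec. field_simplify_eq; [| repeat split; lra].
      replace (M ^ 2) with (X * X + Y * Y) by (rewrite <- Hmm; ring). ring.
Qed.

Lemma Cexp_plus u v : Cexp (u + v) = (Cexp u * Cexp v)%C.
Proof.
  unfold Cexp, Cplus, Cmult, Re, Im; simpl. rewrite exp_plus, cos_plus, sin_plus.
  f_equal; ring.
Qed.

Lemma Cmod_Cexp u : Cmod (Cexp u) = exp (Re u).
Proof.
  unfold Cmod, Cexp; cbn [fst snd].
  replace ((exp (Re u) * cos (Im u)) ^ 2 + (exp (Re u) * sin (Im u)) ^ 2)
    with (exp (Re u) ^ 2 * (sin (Im u) ^ 2 + cos (Im u) ^ 2)) by ring.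
  rewrite <- !Rsqr_pow2, sin2_cos2, Rmult_1_r. apply sqrt_Rsqr, Rlt_le, exp_pos.
Qed.

Lemma Cpow_princ_0 z : Cpow_princ z (RtoC 0) = 1%C.
Proof.
  unfold Cpow_princ. rewrite Cmult_0_l.
  unfold Cexp, Re, Im, RtoC; simpl. rewrite exp_0, cos_0, sin_0. f_equal; ring.
Qed.

Lemma Cpow_princ_succ z e : slit z ->
  Cpow_princ z (RtoC (e + 1)) = (z * Cpow_princ z (RtoC e))%C.
Proof.
  intros Hs. unfold Cpow_princ.
  replace (RtoC (e + 1) * Clog z)%C with (Clog z + RtoC e * Clog z)%C
    by (rewrite RtoC_plus; ring).
  now rewrite Cexp_plus, Cexp_Clog.
Qed.

Lemma Cpow_princ_neg1 z : slit z -> Cpow_princ z (RtoC (-1)) = (/ z)%C.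
Proof.
  intros Hs. pose proof (Cpow_princ_succ z (-1) Hs) as E.
  replace (-1 + 1) with 0 in E by ring. rewrite Cpow_princ_0 in E.
  rewrite <- (Cmult_1_l (/ z)), E. field. now apply slit_neq_0.
Qed.

Lemma Cmod_cos_sin t : Cmod (cos t, sin t) = 1.
Proof.
  unfold Cmod; cbn [fst snd]. rewrite Rplus_comm, <- !Rsqr_pow2, sin2_cos2. apply sqrt_1.
Qed.

Lemma Cmod_neg_sin_cos t : Cmod (- sin t, cos t) = 1.
Proof. rewrite <- (Cmod_cos_sin t). unfold Cmod; cbn [fst snd]. f_equal. ring. Qed.

Lemma Cmod_Cpow_princ_unit t b : Cmod (Cpow_princ (cos t, sin t) (RtoC b)) = 1.
Proof.
  unfold Cpow_princ. rewrite Cmod_Cexp. unfold Clog. rewrite Cmod_cos_sin, ln_1.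
  unfold Re; simpl. rewrite <- exp_0. f_equal. ring.
Qed.

Lemma is_Cderive_Cpow_princ g x d e : is_Cderive g x d -> slit (g x) ->
  is_Cderive (fun t => Cpow_princ (g t) (RtoC e)) x
             (RtoC e * Cpow_princ (g x) (RtoC e) * (d / g x))%C.
Proof.
  intros Hd Hs. unfold Cpow_princ.
  eapply is_Cderive_eq.
  - apply is_Cderive_Cexp.
    exact (is_Cderive_mult _ _ _ _ _ (is_Cderive_const (RtoC e) x)
             (is_Cderive_Clog _ _ _ Hd Hs)).
  - cbv beta. ring.
Qed.

(** * Primitives on the slit plane *)

(** Complex differentiability on the slit plane, encoded as the chain rule along
    every differentiable real path staying in the slit plane. *)
Definition is_slit_derive (F f : C -> C) : Prop :=
  forall g x d, is_Cderive g x d -> slit (g x) ->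
    is_Cderive (fun t => F (g t)) x (f (g x) * d)%C.

Definition has_slit_primitive (h : C -> C) : Prop := exists G, is_slit_derive G h.

Definition slit_differentiable (h : C -> C) : Prop :=
  forall g x d, is_Cderive g x d -> slit (g x) -> ex_Cderive (fun t => h (g t)) x.

Lemma has_slit_primitive_ext h1 h2 : (forall z, slit z -> h1 z = h2 z) ->
  has_slit_primitive h1 -> has_slit_primitive h2.
Proof. intros E [G HG]. exists G. intros g x d Hd Hs. rewrite <- E by auto. auto. Qed.

Lemma has_slit_primitive_plus h1 h2 : has_slit_primitive h1 -> has_slit_primitive h2 ->
  has_slit_primitive (fun z => h1 z + h2 z)%C.
Proof.
  intros [G1 H1] [G2 H2]. exists (fun z => G1 z + G2 z)%C. intros g x d Hd Hs.
  eapply is_Cderive_eq; [exact (is_Cderive_plus _ _ _ _ _ (H1 _ _ _ Hd Hs) (H2 _ _ _ Hd Hs)) |].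
  cbv beta. ring.
Qed.

Lemma has_slit_primitive_scal c h : has_slit_primitive h ->
  has_slit_primitive (fun z => c * h z)%C.
Proof.
  intros [G H]. exists (fun z => c * G z)%C. intros g x d Hd Hs.
  eapply is_Cderive_eq.
  - exact (is_Cderive_mult _ _ _ _ _ (is_Cderive_const c x) (H _ _ _ Hd Hs)).
  - cbv beta. ring.
Qed.

Lemma has_slit_primitive_Cpow_princ e : has_slit_primitive (fun z => Cpow_princ z (RtoC e)).
Proof.
  destruct (Req_dec e (-1)) as [He | He].
  - exists Clog. intros g x d Hd Hs.
    eapply is_Cderive_eq; [exact (is_Cderive_Clog _ _ _ Hd Hs) |].
    subst e. rewrite Cpow_princ_neg1 by auto. field. now apply slit_neq_0.
  - exists (fun z => RtoC (/ (e + 1)) * Cpow_princ z (RtoC (e + 1)))%C. intros g x d Hd Hs.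
    eapply is_Cderive_eq.
    + exact (is_Cderive_mult _ _ _ _ _ (is_Cderive_const _ x)
               (is_Cderive_Cpow_princ _ _ _ _ Hd Hs)).
    + assert (He1 : e + 1 <> 0) by lra.
      cbv beta. rewrite Cpow_princ_succ, RtoC_inv by auto. field.
      split; [now apply slit_neq_0 | intros E; apply He1; now injection E].
Qed.

Definition has_power_primitives (q : C -> C) : Prop :=
  forall e, has_slit_primitive (fun z => q z * Cpow_princ z (RtoC e))%C.

Lemma has_power_primitives_ext q1 q2 : (forall z, q1 z = q2 z) ->
  has_power_primitives q1 -> has_power_primitives q2.
Proof.
  intros E H e. eapply has_slit_primitive_ext; [| apply (H e)].
  intros z _. cbv beta. now rewrite E.
Qed.

Lemma has_power_primitives_1 : has_power_primitives (fun _ => 1%C).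
Proof.
  intros e. eapply has_slit_primitive_ext; [| apply (has_slit_primitive_Cpow_princ e)].
  intros z _. cbv beta. ring.
Qed.

Lemma has_power_primitives_affine q a b : has_power_primitives q ->
  has_power_primitives (fun z => q z * (a + b * z))%C.
Proof.
  intros H e.
  apply has_slit_primitive_ext with
    (fun z => a * (q z * Cpow_princ z (RtoC e)) + b * (q z * Cpow_princ z (RtoC (e + 1))))%C.
  - intros z Hz. rewrite Cpow_princ_succ by auto. ring.
  - apply has_slit_primitive_plus; apply has_slit_primitive_scal; apply H.
Qed.

Lemma has_power_primitives_pow_n w i j :
  has_power_primitives (fun z => pow_n (1 - z) i * pow_n (z - w) j)%C.
Proof.
  induction j as [|j IHj].
  - induction i as [|i IHi].
    + eapply has_power_primitives_ext; [| exact has_power_primitives_1].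
      intros z; simpl. change (@one C_Ring) with (RtoC 1). ring.
    + eapply has_power_primitives_ext;
        [| exact (has_power_primitives_affine _ (RtoC 1) (RtoC (-1)) IHi)].
      intros z; simpl.
      change (@mult C_Ring) with Cmult. change (@one C_Ring) with (RtoC 1). ring.
  - eapply has_power_primitives_ext;
      [| exact (has_power_primitives_affine _ (- w) (RtoC 1) IHj)].
    intros z; simpl. change (@mult C_Ring) with Cmult. ring.
Qed.

Lemma CRInt_is_RInt (f : R -> C) a b (I : C) :
  is_RInt (V := C_R_NormedModule) f a b I -> CRInt f a b = I.
Proof.
  intros H. unfold CRInt, Re, Im.
  apply (RInt_fct_extend_pair (U := R_NormedModule) (V := R_NormedModule) RInt RInt);
    [exact (@is_RInt_unique R_CompleteNormedModule) |
     exact (@is_RInt_unique R_CompleteNormedModule) | exact H].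
Qed.

Lemma ex_Cderive_continuous f x : ex_Cderive f x ->
  continuous (fun s => Re (f s)) x /\ continuous (fun s => Im (f s)) x.
Proof.
  intros [d [H1 H2]].
  split; apply (ex_derive_continuous (K := R_AbsRing) (V := R_NormedModule)); eexists; eauto.
Qed.

Lemma is_RInt_path (G h : C -> C) (g dg : R -> C) a b : a <= b ->
  is_slit_derive G h ->
  (forall s, a <= s <= b -> is_Cderive g s (dg s) /\ slit (g s)) ->
  (forall s, a <= s <= b -> ex_Cderive (fun t => h (g t) * dg t)%C s) ->
  is_RInt (V := C_R_NormedModule) (fun s => h (g s) * dg s)%C a b (G (g b) - G (g a))%C.
Proof.
  intros Hab HG Hg Hc.
  assert (HD : forall s, Rmin a b <= s <= Rmax a b ->
            is_Cderive (fun t => G (g t)) s (h (g s) * dg s)%C).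
  { rewrite Rmin_left, Rmax_right by lra. intros s Hs.
    destruct (Hg s Hs) as [Hd Hsl]. exact (HG g s _ Hd Hsl). }
  assert (HC : forall s, Rmin a b <= s <= Rmax a b ->
            continuous (fun t => Re (h (g t) * dg t)%C) s /\
            continuous (fun t => Im (h (g t) * dg t)%C) s).
  { rewrite Rmin_left, Rmax_right by lra. intros s Hs.
    exact (ex_Cderive_continuous _ _ (Hc s Hs)). }
  apply (is_RInt_fct_extend_pair (U := R_NormedModule) (V := R_NormedModule)).
  - apply (is_RInt_derive (fun t => Re (G (g t)))); intros s Hs;
      [exact (proj1 (HD s Hs)) | exact (proj1 (HC s Hs))].
  - apply (is_RInt_derive (fun t => Im (G (g t)))); intros s Hs;
      [exact (proj2 (HD s Hs)) | exact (proj2 (HC s Hs))].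
Qed.

Lemma ex_Cderive_unit_circle_tangent t : ex_Cderive (fun s => (- sin s, cos s)) t.
Proof.
  exists (- cos t, - sin t). split.
  - exact (is_derive_opp _ _ _ (is_derive_sin t)).
  - exact (is_derive_cos t).
Qed.

Lemma seg_int_primitive (G h : C -> C) z0 z1 :
  is_slit_derive G h -> slit_differentiable h ->
  (forall s, 0 <= s <= 1 -> slit (z0 + RtoC s * (z1 - z0))%C) ->
  seg_int h z0 z1 = (G z1 - G z0)%C.
Proof.
  intros HG Hh Hslit. unfold seg_int. apply CRInt_is_RInt.
  set (g := fun s : R => (z0 + RtoC s * (z1 - z0))%C).
  assert (Hg : forall s, 0 <= s <= 1 -> is_Cderive g s (z1 - z0)%C /\ slit (g s)).
  { intros s Hs. split; [| exact (Hslit s Hs)].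
    eapply is_Cderive_eq.
    - exact (is_Cderive_plus _ _ _ _ _ (is_Cderive_const z0 s)
               (is_Cderive_mult _ _ _ _ _ (is_Cderive_RtoC s) (is_Cderive_const (z1 - z0) s))).
    - cbv beta. ring. }
  pose proof (is_RInt_path G h g (fun _ => z1 - z0)%C 0 1 Rle_0_1 HG Hg) as P.
  replace (g 0) with z0 in P by (unfold g; ring).
  replace (g 1) with z1 in P by (unfold g; ring).
  apply P. intros s Hs. destruct (Hg s Hs) as [Hd Hsl].
  exact (ex_Cderive_mult _ _ _ (Hh _ _ _ Hd Hsl) (ex_intro _ _ (is_Cderive_const _ s))).
Qed.

Lemma is_RInt_arc_primitive (G h : C -> C) phi : 0 < phi < PI ->
  is_slit_derive G h -> slit_differentiable h ->
  is_RInt (V := C_R_NormedModule) (fun t => Cmult (h (cos t, sin t)) (- sin t, cos t)) 0 phi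
          (G (cos phi, sin phi) - G 1)%C.
Proof.
  intros Hphi HG Hh.
  assert (Harc : forall t, 0 <= t <= phi ->
            is_Cderive (fun s => (cos s, sin s)) t (- sin t, cos t) /\ slit (cos t, sin t)).
  { intros t Ht. split; [apply is_Cderive_unit_circle |].
    apply slit_of_Re_pos_or_Im_pos. unfold Re, Im; simpl.
    destruct (Req_dec t 0) as [-> | E]; [left; rewrite cos_0; lra |].
    right. apply sin_gt_0; lra. }
  replace (RtoC 1) with ((cos 0, sin 0) : C) by (now rewrite cos_0, sin_0).
  apply (is_RInt_path G h _ _ 0 phi (Rlt_le _ _ (proj1 Hphi)) HG Harc).
  intros t Ht. destruct (Harc t Ht) as [Hd Hsl].
  exact (ex_Cderive_mult _ _ _ (Hh _ _ _ Hd Hsl) (ex_Cderive_unit_circle_tangent t)).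
Qed.

Lemma slit_segment_1_unit_circle phi s : 0 < phi < PI -> 0 <= s <= 1 ->
  slit (1 + RtoC s * ((cos phi, sin phi) - 1))%C.
Proof.
  intros Hphi Hs. apply slit_of_Re_pos_or_Im_pos. unfold Re, Im; simpl.
  destruct (Req_dec s 0) as [-> | E]; [left; lra |].
  right. assert (0 < sin phi) by (apply sin_gt_0; lra). nra.
Qed.

Lemma iota_R_empty (P : R -> Prop) : (forall x, ~ P x) -> iota P = 0.
Proof.
  intros HP. unfold iota, lim.
  change (R_complete_lim (fun A : R -> Prop => forall x, P x -> A x) = 0).
  unfold R_complete_lim. rewrite (Lub_Rbar_eqset _ (fun _ => True)).
  - replace (Lub_Rbar (fun _ => True)) with p_infty; [reflexivity |].
    symmetry. apply is_lub_Rbar_unique. split.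
    + intros x _. exact I.
    + intros [b | |] Hb; simpl; auto.
      * specialize (Hb (b + 1) I). simpl in Hb. lra.
      * exact (Hb 0 I).
  - intros x. split; [auto |]. intros _ y Hy. now destruct (HP y).
Qed.

Lemma RInt_gen_ge_0 (f : R -> R) : (forall t, 0 <= f t) ->
  0 <= RInt_gen f (at_right 0) (Rbar_locally p_infty).
Proof.
  intros Hf.
  destruct (classic (exists l, is_RInt_gen f (at_right 0) (Rbar_locally p_infty) l))
    as [[l Hl] | Hn].
  - rewrite (is_RInt_gen_unique f l Hl).
    assert (Hord : filter_prod (at_right 0) (Rbar_locally p_infty)
                     (fun ab : R * R => fst ab <= snd ab)).
    { apply Filter_prod with (fun a => a < 1) (fun b => 1 < b).
      - exists (mkposreal 1 Rlt_0_1). intros y Hy _.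
        apply (Rabs_def2 (y - 0)) in Hy. simpl in Hy. lra.
      - now exists 1.
      - intros a b Ha Hb; simpl; lra. }
    pose proof (is_RInt_gen_scal f 0 l Hl) as Hzero.
    apply Rle_trans with (@norm R_AbsRing R_NormedModule (scal 0 l)); [apply norm_ge_0 |].
    apply (RInt_gen_norm (V := R_CompleteNormedModule) (fun y => scal 0 (f y)) f _ l Hord);
      [| exact Hzero | exact Hl].
    apply filter_forall. intros ab x _. unfold scal; simpl. unfold mult; simpl.
    rewrite Rmult_0_l. unfold norm; simpl. unfold abs; simpl. rewrite Rabs_R0. apply Hf.
  - (* no improper integral: [RInt_gen] is the junk value [0] *)
    unfold RInt_gen. rewrite iota_R_empty; [lra |].
    intros x Hx. apply Hn. now exists x.
Qed.

Lemma Gamma_ge_0 s : 0 <= Gamma s.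
Proof.
  unfold Gamma. apply RInt_gen_ge_0. intros t. unfold Rpower.
  apply Rmult_le_pos; left; apply exp_pos.
Qed.

Lemma cst_nr_ge_0 n r : 0 <= cst_nr n r.
Proof.
  pose proof Gamma_ge_0 as HG.
  unfold cst_nr.
  destruct (Rle_lt_or_eq_dec 0 (INR (fact r) * Gamma (/ INR n)))
    as [Hpos | Hzero]; [apply Rmult_le_pos; [apply pos_INR | apply HG] | |].
  - apply Rdiv_le_0_compat; [apply HG | exact Hpos].
  - rewrite <- Hzero. unfold Rdiv. rewrite Rinv_0, Rmult_0_r. lra.
Qed.

(** * The bound along the arc *)

Lemma sin_mult_le_sin_half_sqr a b : sin a * sin b <= sin ((a + b) / 2) ^ 2.
Proof.
  pose proof (cos_minus a b). pose proof (cos_plus a b). pose proof (COS_bound (a - b)).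
  assert (cos (a + b) = 1 - 2 * sin ((a + b) / 2) * sin ((a + b) / 2)).
  { rewrite <- cos_2a_sin. f_equal. field. }
  simpl. lra.
Qed.

Lemma Cmod_sub_cos_sin a b : 0 <= b - a <= 2 * PI ->
  Cmod ((cos a, sin a) - (cos b, sin b))%C = 2 * sin ((b - a) / 2).
Proof.
  intros Hab.
  assert (Hs : 0 <= sin ((b - a) / 2)) by (apply sin_ge_0; lra).
  assert (Cm : cos b * cos a + sin b * sin a
               = 1 - 2 * sin ((b - a) / 2) * sin ((b - a) / 2)).
  { rewrite <- cos_minus, <- cos_2a_sin. f_equal. field. }
  pose proof (sin2_cos2 a) as Ea. pose proof (sin2_cos2 b) as Eb. unfold Rsqr in Ea, Eb.
  unfold Cmod; cbn [fst snd Cminus Cplus Copp].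
  replace ((cos a + - cos b) ^ 2 + (sin a + - sin b) ^ 2) with ((2 * sin ((b - a) / 2)) ^ 2).
  - apply sqrt_pow2. lra.
  - transitivity ((sin a * sin a + cos a * cos a) + (sin b * sin b + cos b * cos b)
                  - 2 * (cos b * cos a + sin b * sin a)); [rewrite Ea, Eb, Cm |]; ring.
Qed.

Lemma Cmod_sub_arc_mult_le phi t : 0 <= t <= phi -> phi <= 2 * PI ->
  Cmod (1 - (cos t, sin t))%C * Cmod ((cos t, sin t) - (cos phi, sin phi))%C
  <= Cmod (1 - (cos (phi / 2), sin (phi / 2)))%C ^ 2.
Proof.
  intros Ht Hphi.
  replace (RtoC 1) with ((cos 0, sin 0) : C) by (now rewrite cos_0, sin_0).
  rewrite !Cmod_sub_cos_sin by lra.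
  pose proof (sin_mult_le_sin_half_sqr ((t - 0) / 2) ((phi - t) / 2)).
  replace (((t - 0) / 2 + (phi - t) / 2) / 2) with ((phi / 2 - 0) / 2) in * by field.
  simpl in *. lra.
Qed.

Lemma Cmod_pow_n z k : Cmod (pow_n z k) = Cmod z ^ k.
Proof.
  induction k as [|k IH].
  - exact Cmod_1.
  - change (Cmod (z * pow_n z k)%C = Cmod z * Cmod z ^ k). now rewrite Cmod_mult, IH.
Qed.

Definition Rnr_integrand (r : nat) (w : C) (e : R) (t : C) : C :=
  (pow_n (1 - t) r * pow_n (t - w) r * Cpow_princ t (RtoC e))%C.

Lemma Rnr_integrand_has_slit_primitive r w e : has_slit_primitive (Rnr_integrand r w e).
Proof. exact (has_power_primitives_pow_n w r r e). Qed.

Lemma Rnr_integrand_slit_differentiable r w e : slit_differentiable (Rnr_integrand r w e).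
Proof.
  intros g x d Hd Hs.
  pose proof (is_Cderive_minus _ _ _ _ _ (is_Cderive_const 1 x) Hd) as H1.
  pose proof (is_Cderive_minus _ _ _ _ _ Hd (is_Cderive_const w x)) as H2.
  pose proof (is_Cderive_Cpow_princ _ _ _ e Hd Hs) as H3.
  exact (ex_Cderive_mult _ _ _
           (ex_Cderive_mult _ _ _ (ex_Cderive_pow_n _ _ r (ex_intro _ _ H1))
                                  (ex_Cderive_pow_n _ _ r (ex_intro _ _ H2)))
           (ex_intro _ _ H3)).
Qed.

Lemma Cmod_Rnr_integrand_arc_le r phi e t : 0 <= t <= phi -> phi <= 2 * PI ->
  Cmod (Rnr_integrand r (cos phi, sin phi) e (cos t, sin t))
  <= Cmod (1 - (cos (phi / 2), sin (phi / 2)))%C ^ (2 * r).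
Proof.
  intros Ht Hphi. unfold Rnr_integrand.
  rewrite !Cmod_mult, !Cmod_pow_n, Cmod_Cpow_princ_unit, Rmult_1_r,
    <- Rpow_mult_distr, pow_mult.
  apply pow_incr. split.
  - apply Rmult_le_pos; apply Cmod_ge_0.
  - now apply Cmod_sub_arc_mult_le.
Qed.

Theorem lemma2p5 (phi : R) (n r : nat) :
  0 < phi < PI -> (0 < n)%nat -> (0 < r)%nat ->
  let w : C := (cos phi, sin phi) in
  let sqrtw : C := (cos (phi / 2), sin (phi / 2)) in
  Cmod (R_nr n r w) <= cst_nr n r * phi * (Cmod (Cminus (RtoC 1) sqrtw)) ^ (2 * r).
Proof.
  intros Hphi _ _ w sqrtw.
  set (e := - (INR r + 1 - / INR n)).
  destruct (Rnr_integrand_has_slit_primitive r w e) as [G HG].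
  pose proof (Rnr_integrand_slit_differentiable r w e) as Hh.
  change (R_nr n r w) with (RtoC (cst_nr n r) * seg_int (Rnr_integrand r w e) 1 w)%C.
  rewrite (seg_int_primitive G _ 1 w HG Hh) by (intros; now apply slit_segment_1_unit_circle).
  rewrite Cmod_mult, Cmod_R, Rabs_pos_eq, Rmult_assoc by apply cst_nr_ge_0.
  apply Rmult_le_compat_l; [apply cst_nr_ge_0 |].
  rewrite Cmod_norm. replace phi with (phi - 0) at 1 by ring.
  refine (norm_RInt_le_const _ 0 phi _ _ _ _ (is_RInt_arc_primitive G _ phi Hphi HG Hh));
    [lra |].
  intros t Ht. rewrite <- Cmod_norm, Cmod_mult, Cmod_neg_sin_cos, Rmult_1_r.
  pose proof PI_RGT_0. apply Cmod_Rnr_integrand_arc_le; lra.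
Qed.
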